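(* Let $S\subseteq\mathbb{R}^n$ be a closed set, $H$ an affine hyperplane, and $C\subseteq\mathbb{R}^n$ a convex $S$-free set. Assume $C=\{x\in\mathbb{R}^n : \alpha^\mathsf{T} x\le\beta\ \forall(\alpha,\beta)\in\Gamma\}$ for some family $\Gamma$ of inequalities, and that for every $(\alpha,\beta)\in\Gamma$ there is a point $x\in S\cap C\cap H$ that exposes $(\alpha,\beta)$ with respect to $C$. Then $C$ is maximal $S$-free with respect to $H$.
   Context: A convex set $C$ is $S$-free if $\operatorname{int}(C)\cap S=\emptyset$. Given an affine hyperplane $H$, a closed convex $C$ is $S$-free with respect to $H$ if the interior of $C\cap H$ relative to $H$ does not meet $S\cap H$; it is maximal $S$-free with respect to $H$ if for every closed convex $C'\supseteq C$ that is $S$-free with respect to $H$, $C'\cap H\subseteq C\cap H$. An inequality $\alpha^\mathsf{T} x\le\beta$ (written $(\alpha,\beta)$) is valid for $C$ if it holds on $C$; it is non-trivial if $\alpha\neq0$. A point $x_0$ exposes a valid inequality $(\alpha,\beta)$ with respect to convex $C$ if $\alpha^\mathsf{T} x_0=\beta$ and for every non-trivial valid inequality $\gamma^\mathsf{T} x\le\delta$ for $C$ with $\gamma^\mathsf{T} x_0=\delta$ there is $\mu>0$ with $\gamma=\mu\alpha$ and $\delta=\mu\beta$. *)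

From HB Require Import structures.
From mathcomp Require Import all_boot all_order all_algebra.
From mathcomp Require Import all_classical all_reals all_analysis.
Set Implicit Arguments. Unset Strict Implicit. Unset Printing Implicit Defensive.
Import Order.TTheory GRing.Theory Num.Theory.
Import numFieldNormedType.Exports.
Local Open Scope classical_set_scope.
Local Open Scope ring_scope.

Section Defs.
Variables (R : realType) (n : nat).
Local Notation V := 'rV[R]_n.

Definition dotp (a x : V) : R := \sum_(i < n) a 0 i * x 0 i.

(* the affine hyperplane {x | a^T x = b}, a hyperplane when a != 0 *)
Definition hyperplane (a : V) (b : R) : set V := [set x | dotp a x = b].

Definition convexR (C : set V) : Prop :=
  forall x y, C x -> C y -> forall t : R, 0 <= t -> t <= 1 ->
    C (t *: x + (1 - t) *: y).

Definition S_free (S C : set V) : Prop := interior C `&` S = set0.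

Definition rel_interior (H A : set V) : set V :=
  [set x | A x /\ H x /\ exists2 e : R, 0 < e &
     forall y, H y -> `|y - x| < e -> A y].

Definition S_free_wrt (S H C : set V) : Prop :=
  rel_interior H (C `&` H) `&` (S `&` H) = set0.

Definition maximal_S_free_wrt (S H C : set V) : Prop :=
  forall C' : set V, closed C' -> convexR C' -> C `<=` C' ->
    S_free_wrt S H C' -> C' `&` H `<=` C `&` H.

Definition valid_ineq (C : set V) (p : V * R) : Prop :=
  forall x, C x -> dotp p.1 x <= p.2.

Definition exposes (x0 : V) (p : V * R) (C : set V) : Prop :=
  dotp p.1 x0 = p.2 /\
  forall q : V * R, valid_ineq C q -> q.1 != 0 -> dotp q.1 x0 = q.2 ->
    exists2 mu : R, 0 < mu & q.1 = mu *: p.1 /\ q.2 = mu * p.2.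

End Defs.

From HB Require Import structures.
From mathcomp Require Import all_boot all_order all_algebra.
From mathcomp Require Import all_classical all_reals all_analysis.
From mathcomp Require Import ring lra.
Import Order.TTheory GRing.Theory Num.Theory.
Import numFieldNormedType.Exports.
Local Open Scope classical_set_scope.
Local Open Scope ring_scope.

(* If C' contains C, is closed, convex and S-free relative to H, then no exposing
   point x in S /\ C /\ H can lie in the interior of C'.  Hence C' has a supporting
   hyperplane at x, whose inequality is valid for C and tight at x; as x exposes
   (alpha, beta), it is a positive multiple of (alpha, beta), which is therefore
   valid on C'.  So every point of C' /\ H satisfies all of Gamma, i.e. lies in C.
   The supporting hyperplane is the limit of unit normals (z - p)/|z - p|, where z
   runs over points outside C' close to x and p is the nearest point of C' to z. *)

Section Dotp.
Context {R : realType} {n : nat}.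
Implicit Types (u v w : 'rV[R]_n) (k : R).

Lemma dotpC u v : dotp u v = dotp v u.
Proof. by apply: eq_bigr => i _; rewrite mulrC. Qed.

Lemma dotpDr u v w : dotp u (v + w) = dotp u v + dotp u w.
Proof. by rewrite /dotp -big_split; apply: eq_bigr => i _; rewrite mxE mulrDr. Qed.

Lemma dotpNr u v : dotp u (- v) = - dotp u v.
Proof. by rewrite /dotp -sumrN; apply: eq_bigr => i _; rewrite mxE mulrN. Qed.

Lemma dotpBr u v w : dotp u (v - w) = dotp u v - dotp u w.
Proof. by rewrite dotpDr dotpNr. Qed.

Lemma dotpZr k u v : dotp u (k *: v) = k * dotp u v.
Proof. by rewrite /dotp mulr_sumr; apply: eq_bigr => i _; rewrite mxE mulrCA. Qed.

Lemma dotpBl u v w : dotp (u - v) w = dotp u w - dotp v w.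
Proof. by rewrite dotpC dotpBr !(dotpC w). Qed.

Lemma dotpZl k u v : dotp (k *: u) v = k * dotp u v.
Proof. by rewrite dotpC dotpZr dotpC. Qed.

Lemma dotpp_subZ k u v :
  dotp (u - k *: v) (u - k *: v) = dotp u u - 2 * k * dotp u v + k ^+ 2 * dotp v v.
Proof. by rewrite !dotpBl !dotpBr !dotpZl !dotpZr (dotpC v u); ring. Qed.

Lemma dotpp_ge0 v : 0 <= dotp v v.
Proof. by apply: sumr_ge0 => i _; rewrite -expr2 sqr_ge0. Qed.

Lemma normr_coord_le v i : `|v 0 i| <= `|v|.
Proof.
rewrite [leRHS]/Num.norm /= mx_normrE; apply/bigmax_geP; right => /=.
by exists (0, i).
Qed.

Lemma sqr_normr_le_dotpp v : `|v| ^+ 2 <= dotp v v.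
Proof.
have [v0|/mx_norm_neq0 [[i j] vij]] := eqVneq `|v| 0; first by rewrite v0 expr0n dotpp_ge0.
rewrite /Num.norm /= vij /= ord1 real_normK ?num_real // expr2 /dotp (bigD1 j) //=.
by rewrite lerDl; apply: sumr_ge0 => l _; rewrite -expr2 sqr_ge0.
Qed.

Lemma dotp_le_norm u v : dotp u v <= n%:R * (`|u| * `|v|).
Proof.
rewrite mulr_natl -[n in _ *+ n]card_ord -sumr_const; apply: ler_sum => i _.
apply: le_trans (ler_norm _) _; rewrite normrM.
by apply: ler_pM => //; apply: normr_coord_le.
Qed.

Lemma continuous_dotp {T : topologicalType} (f g : T -> 'rV[R]_n) :
  continuous f -> continuous g -> continuous (fun t => dotp (f t) (g t)).
Proof.
move=> cf cg; apply: continuous_big => [|i _ t]; first exact: add_continuous.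
apply: continuousM.
  exact: continuous_comp (cf t) (@coord_continuous R 1 n 0 i (f t)).
exact: continuous_comp (cg t) (@coord_continuous R 1 n 0 i (g t)).
Qed.

End Dotp.

Section SupportingHyperplane.
Context {R : realType} {n : nat}.
Implicit Types (K : set 'rV[R]_n) (p x z : 'rV[R]_n).

Lemma closed_norm_le_compact K r :
  closed K -> (forall v, K v -> `|v| <= r) -> compact K.
Proof.
move=> cK Kr; apply: bounded_closed_compact cK; exists r; split; first exact: num_real.
by move=> M rM v /Kr /le_lt_trans /(_ rM) /ltW.
Qed.

Lemma closed_nearest_point K z : closed K -> K !=set0 ->
  exists2 p, K p & forall w, K w -> dotp (z - p) (z - p) <= dotp (z - w) (z - w).
Proof.
move=> cK [x Kx].
pose d w := dotp (z - w) (z - w).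
have cd : continuous d.
  by apply: continuous_dotp => w; apply: continuousB => //; exact: cst_continuous.
pose L := K `&` [set w | d w <= d x].
have cL : compact L.
  apply: (closed_norm_le_compact _ (`|z| + (1 + d x))).
    apply: closedI => //.
    apply: (@preimage_closed _ _ d [set y | y <= d x]); last exact: closed_le.
    by move=> w _; exact: cd.
  move=> w [_ /= dw]; have := sqr_normr_le_dotpp (z - w); rewrite -/(d w) => zw.
  have -> : w = z - (z - w) by rewrite opprB addrC subrK.
  apply: le_trans (ler_normB _ _) _; rewrite lerD2l.
  have := normr_ge0 (z - w); nra.
have [p Lp pmin] := EVT_min_rV (ex_intro _ x (conj Kx (lexx _))) cL (continuous_subspaceT cd).
move: Lp; rewrite inE => -[Kp dp]; exists p => // w Kw.
have [dw|dw] := leP (d w) (d x); first by apply: pmin; rewrite inE.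
exact: ltW (le_lt_trans dp dw).
Qed.

Lemma nearest_point_obtuse {K p z} : convexR K -> K p ->
  (forall w, K w -> dotp (z - p) (z - p) <= dotp (z - w) (z - w)) ->
  forall w, K w -> dotp (z - p) (w - p) <= 0.
Proof.
move=> cvxK Kp pmin w Kw; rewrite leNgt; apply/negP => c_gt0.
set c := dotp (z - p) (w - p) in c_gt0.
set D := dotp (w - p) (w - p).
have D_ge0 : 0 <= D := dotpp_ge0 _.
(* Moving from p towards w by t would bring the point strictly closer to z. *)
pose t := c / (D + c).
have Dc_gt0 : 0 < D + c by lra.
have tDc : t * (D + c) = c by rewrite /t divfK ?gt_eqF.
have t_gt0 : 0 < t by rewrite divr_gt0.
have t_le1 : t <= 1 by rewrite ler_pdivrMr // mul1r; lra.
have := pmin _ (cvxK _ _ Kw Kp t (ltW t_gt0) t_le1).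
have -> : z - (t *: w + (1 - t) *: p) = (z - p) - t *: (w - p).
  by apply/rowP => i; rewrite !mxE; ring.
rewrite dotpp_subZ -/c -/D; nra.
Qed.

Lemma boundary_normal_approx {K x} : closed K -> convexR K -> K x -> ~ interior K x ->
  forall e, 0 < e -> exists g, `|g| = 1 /\ forall w, K w -> dotp g (w - x) <= e.
Proof.
move=> cK cvxK Kx xnint e e_gt0.
(* [dotp_le_norm] costs a factor n for the max-norm; [eps] absorbs it. *)
pose eps := e / n.+1%:R.
have eps_gt0 : 0 < eps by rewrite divr_gt0.
have [z /= zx zK] : exists2 z, ball x eps z & ~ K z.
  apply: contrapT => noz; apply: xnint; apply/nbhs_ballP; exists eps => // z xz.
  by apply: contrapT => zK; apply: noz; exists z.
move: zx; rewrite -ball_normE /= distrC => zx.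
have [p Kp pmin] := closed_nearest_point K z cK (ex_intro _ x Kx).
pose m := `|z - p|.
have m_gt0 : 0 < m by rewrite normr_gt0 subr_eq0; apply: contra_notN zK => /eqP ->.
exists (m^-1 *: (z - p)); split.
  by rewrite normrZ ger0_norm ?invr_ge0 ?ltW // mulVf ?gt_eqF.
move=> w Kw; rewrite dotpZl mulrC ler_pdivrMr //.
have -> : w - x = (w - p) - (z - p) + (z - x) by rewrite opprB !subrKA.
rewrite dotpDr dotpBr.
have nzx : n%:R * `|z - x| <= e.
  have : n.+1%:R * `|z - x| <= e by rewrite -ler_pdivlMl ?ltr0n // mulrC ltW.
  by rewrite -natr1 mulrDl mul1r; have := normr_ge0 (z - x); lra.
have := ler_wpM2l (ltW m_gt0) nzx; rewrite mulrCA (mulrC m e).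
have := nearest_point_obtuse cvxK Kp pmin w Kw; have := dotpp_ge0 (z - p).
have := dotp_le_norm (z - p) (z - x); rewrite -/m; lra.
Qed.

Lemma supporting_hyperplane {K x} : closed K -> convexR K -> K x -> ~ interior K x ->
  exists2 g, g != 0 & forall w, K w -> dotp g w <= dotp g x.
Proof.
move=> cK cvxK Kx xnint.
have approx k : exists g : 'rV[R]_n,
    `|g| = 1 /\ forall w, K w -> dotp g (w - x) <= k.+1%:R^-1.
  by apply: boundary_normal_approx; rewrite ?invr_gt0.
have [G HG] := choice approx.
pose sphere := [set g : 'rV[R]_n | `|g| = 1].
have csphere : compact sphere.
  apply: (closed_norm_le_compact _ 1) => [|g /= ->//].
  apply: (@preimage_closed _ R (fun g : 'rV[R]_n => `|g|) [set 1]); last exact: closed_eq.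
  by move=> g _; exact: norm_continuous.
have Gsphere : (G @ \oo) sphere by exists 0%N => // k _; case: (HG k).
have [gam [gam1 clgam]] := csphere _ _ Gsphere.
exists gam; first by rewrite -normr_eq0 gam1 oner_neq0.
move=> w Kw; rewrite -subr_le0 -dotpBr.
have gam_le k : dotp gam (w - x) <= k.+1%:R^-1.
  pose A := [set g : 'rV[R]_n | dotp g (w - x) <= k.+1%:R^-1].
  have cA : closed A.
    apply: (@preimage_closed _ R (fun g : 'rV[R]_n => dotp g (w - x))
      [set y | y <= k.+1%:R^-1]); last exact: closed_le.
    by move=> g _; apply: continuous_dotp => [y|]; [exact: cvg_id | exact: cst_continuous].
  have GA : (G @ \oo) A.
    exists k => // j /= kj; apply: le_trans ((HG j).2 w Kw) _.
    by rewrite lef_pV2 ?posrE // ler_nat.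
  move: clgam; rewrite clusterE => /(_ A GA).
  by rewrite -(proj1 (closure_id A) cA).
rewrite leNgt; apply/negP => /ltr_add_invr [k]; rewrite add0r.
by apply/negP; rewrite -leNgt.
Qed.

End SupportingHyperplane.

Lemma S_free_wrt_not_interior {R : realType} {n : nat} {S H C : set 'rV[R]_n} {x} :
  S_free_wrt S H C -> S x -> H x -> ~ interior C x.
Proof.
move=> SfH Sx Hx /nbhs_ballP [e e_gt0 Ce].
suff : set0 x by [].
rewrite -SfH; split; last by [].
split; first by split => //; apply: Ce; exact: ballxx.
split => //; exists e => // y Hy xy; split => //.
by apply: Ce; rewrite -ball_normE /= distrC.
Qed.

Lemma exposed_ineq_valid_superset {R : realType} {n : nat} {C C' : set 'rV[R]_n} {x p} :
  closed C' -> convexR C' -> C `<=` C' -> C x -> ~ interior C' x ->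
  exposes x p C -> valid_ineq C' p.
Proof.
move=> cC' cvxC' CC' Cx xnint [_ xexp].
have [g g_neq0 gsupp] := supporting_hyperplane cC' cvxC' (CC' _ Cx) xnint.
have [mu mu_gt0 [gE gxE]] := xexp (g, dotp g x) (fun w Cw => gsupp w (CC' _ Cw)) g_neq0 erefl.
move=> w C'w; rewrite -(ler_pM2l mu_gt0) -gxE -dotpZl -gE.
exact: gsupp.
Qed.

Theorem theorem3 (R : realType) (n : nat) (S : set 'rV[R]_n)
  (a : 'rV[R]_n) (b : R) (C : set 'rV[R]_n) (Gamma : set ('rV[R]_n * R)) :
  closed S ->
  a != 0 ->
  convexR C ->
  S_free S C ->
  C = [set x | forall p, Gamma p -> dotp p.1 x <= p.2] ->
  (forall p, Gamma p -> exists x, [/\ S x, C x, hyperplane a b x & exposes x p C]) ->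
  maximal_S_free_wrt S (hyperplane a b) C.
Proof.
move=> _ _ _ _ CE Cexp C' cC' cvxC' CC' SfH y [C'y Hy]; split => //.
rewrite CE => p Gp; have [x [Sx Cx Hx xp]] := Cexp p Gp.
have xnint := S_free_wrt_not_interior SfH Sx Hx.
exact: exposed_ineq_valid_superset cC' cvxC' CC' Cx xnint xp _ C'y.
Qed.
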